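(* Let $a=(a_1,\dots,a_m)$ and $a'$ be two compositions such that the multisets $M(a)=\{a_1,\dots,a_m\}$ and $M(a')$ are equal (i.e. $a'$ is a rearrangement of $a$). Then for every $n\ge 0$, the number of compositions of size $n$ that dominate $a$ equals the number of compositions of size $n$ that dominate $a'$.
   Context: A composition is a finite sequence of positive integers; its size is the sum of its components and its length is the number of components. A composition $b=(b_1,\dots,b_k)$ dominates $a=(a_1,\dots,a_m)$ if there are indices $1\le i(1)<i(2)<\dots<i(m)\le k$ with $a_j\le b_{i(j)}$ for every $j\in[m]$. *)

From mathcomp Require Import all_boot.
Set Implicit Arguments. Unset Strict Implicit. Unset Printing Implicit Defensive.

(* A composition: finite sequence of positive integers. Size = sumn, length = size. *)
Definition is_composition (a : seq nat) : Prop := all (fun x => 0 < x) a.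

Definition dominates (b a : seq nat) : Prop :=
  exists f : 'I_(size a) -> 'I_(size b),
    (forall j1 j2 : 'I_(size a), j1 < j2 -> f j1 < f j2) /\
    (forall j : 'I_(size a), nth 0 a j <= nth 0 b (f j)).

From mathcomp Require Import all_boot ssralg poly zify.
Set Implicit Arguments. Unset Strict Implicit. Unset Printing Implicit Defensive.

(* Let D_a(n) be the number of compositions of size n dominating a.  Whether b
   dominates a can be decided greedily: scan b from the left and match the
   first remaining part x of a with the first part c of b such that x <= c.
   Splitting a composition b of x :: a at the part matched to x gives
     D_(x::a) = N_x * D_a,
   where * is the Cauchy convolution of sequences and N_x is the unique
   solution of N_x = P_x + Q_x * N_x, with P_x(c) = [c >= x] and
   Q_x(c) = [0 < c < x] counting the matched resp. skipped part.  Hence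
   D_a = N_(a_1) * ... * N_(a_m) * D_[::], and since convolution is
   associative and commutative, D_a only depends on the multiset of parts. *)

Definition conv (f g : nat -> nat) (n : nat) : nat :=
  \sum_(i < n.+1) f i * g (n - i).

(* The polynomial f_0 + f_1 X + ... + f_N X^N; its products compute
   convolutions in degrees up to N. *)
Definition truncp (N : nat) (f : nat -> nat) : {poly nat} := \poly_(i < N.+1) f i.

Lemma coef_truncp N f k : k <= N -> ((truncp N f)`_k)%R = f k.
Proof. by move=> hk; rewrite /truncp coef_poly ltnS hk. Qed.

Lemma conv_coefM N f g k : k <= N -> conv f g k = ((truncp N f * truncp N g)`_k)%R.
Proof.
move=> hk; rewrite coefM /conv; apply: eq_bigr => i _.
have hi : i <= N by apply: leq_trans (ltnSE (ltn_ord i)) hk.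
by rewrite !coef_truncp //; apply: leq_trans (leq_subr _ _) hk.
Qed.

(* Associativity is inherited from the polynomial semiring {poly nat}. *)
Lemma convA f g h n : conv f (conv g h) n = conv (conv f g) h n.
Proof.
have -> : conv f (conv g h) n = ((truncp n f * (truncp n g * truncp n h))`_n)%R.
  rewrite coefM; apply: eq_bigr => i _.
  by rewrite coef_truncp ?(ltnSE (ltn_ord i)) // (conv_coefM g h (leq_subr i n)).
have -> : conv (conv f g) h n = ((truncp n f * truncp n g * truncp n h)`_n)%R.
  rewrite coefM; apply: eq_bigr => i _.
  by rewrite (coef_truncp h (leq_subr i n)) (conv_coefM f g (ltnSE (ltn_ord i))).
by rewrite GRing.mulrA.
Qed.

(* Commutativity, by reversing the summation range. *)
Lemma convC f g n : conv f g n = conv g f n.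
Proof.
rewrite /conv (reindex_inj rev_ord_inj) /=; apply: eq_bigr => i _.
by rewrite subSS (subKn (ltnSE (ltn_ord i))) mulnC.
Qed.

Lemma eq_conv f f' g g' n : f =1 f' -> g =1 g' -> conv f g n = conv f' g' n.
Proof. by move=> hf hg; apply: eq_bigr => i _; rewrite hf hg. Qed.

Lemma convDl f f' g n : conv (fun k => f k + f' k) g n = conv f g n + conv f' g n.
Proof. by rewrite /conv -big_split; apply: eq_bigr => i _; rewrite mulnDl. Qed.

(* Linear recursions G = R + Q * G with Q 0 = 0: the value G n only depends on
   G 0, ..., G (n - 1), so there is exactly one solution. *)
Section LinearRecursion.

Variables R Q : nat -> nat.
Hypothesis Q0 : Q 0 = 0.

Fixpoint rec_iter (fuel n : nat) : nat :=
  if fuel is k.+1 then R n + conv Q (rec_iter k) n else 0.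

Definition rec_sol (n : nat) : nat := rec_iter n.+1 n.

(* Terms of the convolution Q * G with i = 0 vanish, the others only involve
   G at arguments n - i < n. *)
Lemma conv_Q_ext G G' n :
  (forall i, 0 < i <= n -> G (n - i) = G' (n - i)) -> conv Q G n = conv Q G' n.
Proof.
move=> hG; apply: eq_bigr => i _.
case: (posnP i) => [->|ip]; first by rewrite Q0.
by rewrite hG // ip -ltnS ltn_ord.
Qed.

Lemma rec_iter_fuel k1 k2 n : n < k1 -> n < k2 -> rec_iter k1 n = rec_iter k2 n.
Proof.
elim: k1 k2 n => [|j1 IH] [|j2] n //= h1 h2.
congr (_ + _); apply: conv_Q_ext => i hi; apply: IH; lia.
Qed.

Lemma rec_solE n : rec_sol n = R n + conv Q rec_sol n.
Proof.
rewrite /rec_sol /=; congr (_ + _); apply: conv_Q_ext => i hi.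
by apply: (@rec_iter_fuel _ (n - i).+1); lia.
Qed.

Lemma rec_uniq G1 G2 :
  (forall n, G1 n = R n + conv Q G1 n) -> (forall n, G2 n = R n + conv Q G2 n) ->
  G1 =1 G2.
Proof.
move=> h1 h2; elim/ltn_ind => n IH.
rewrite h1 h2; congr (_ + _); apply: conv_Q_ext => i hi; apply: IH; lia.
Qed.

Lemma conv_rec_sol P f (N : nat -> nat) : (forall n, N n = P n + conv Q N n) ->
  forall n, conv N f n = conv P f n + conv Q (conv N f) n.
Proof.
move=> hN n; rewrite (@eq_conv _ (fun k => P k + conv Q N k) f f) //.
by rewrite convDl convA.
Qed.

End LinearRecursion.

Fixpoint greedy_dom (b a : seq nat) : bool :=
  match b, a with
  | [::], _ => a == [::]
  | _, [::] => true
  | c :: b', x :: a' => if x <= c then greedy_dom b' a' else greedy_dom b' a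
  end.

(* Domination with the matching given by a function on nat rather than on
   ordinals, which is convenient for induction on b. *)
Definition dom_nat (b a : seq nat) : Prop :=
  exists g : nat -> nat,
    (forall j1 j2, j1 < j2 -> j2 < size a -> g j1 < g j2) /\
    (forall j, j < size a -> g j < size b /\ nth 0 a j <= nth 0 b (g j)).

Lemma dominates_dom_nat b a : dominates b a <-> dom_nat b a.
Proof.
split=> [[f [f_mono f_le]] | [g [g_mono g_le]]].
  pose g j := oapp (fun o : 'I_(size a) => val (f o)) 0 (insub j).
  have gE j (hj : j < size a) : g j = f (Ordinal hj) by rewrite /g insubT.
  exists g; split=> [j1 j2 h1 h2 | j hj].
    by rewrite (gE _ (ltn_trans h1 h2)) (gE _ h2); exact: f_mono.
  by rewrite gE; split; [exact: ltn_ord | exact: f_le].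
exists (fun o : 'I_(size a) => Ordinal (proj1 (g_le _ (ltn_ord o)))); split.
  by move=> j1 j2 /= h; exact: g_mono.
by move=> j /=; exact: (proj2 (g_le _ (ltn_ord j))).
Qed.

Lemma greedy_dom_sound b a : greedy_dom b a -> dom_nat b a.
Proof.
elim: b a => [|c b IH] [|x a] //=; try by exists (fun _ => 0).
case: ifP => hxc /IH [g [g_mono g_le]].
  exists (fun j => if j is j'.+1 then (g j').+1 else 0); split.
    by move=> [|j1] [|j2] //= h1 h2; rewrite ltnS; apply: g_mono.
  by move=> [|j] //= hj; have [h3 h4] := g_le j hj.
exists (fun j => (g j).+1); split.
  by move=> j1 j2 h1 h2; rewrite ltnS; apply: g_mono.
by move=> j hj; have [h3 h4] := g_le j hj.
Qed.

(* Completeness: any matching can be shifted to one avoiding the first part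
   of b whenever the greedy test skips that part. *)
Lemma greedy_dom_complete b a : dom_nat b a -> greedy_dom b a.
Proof.
elim: b a => [|c b IH] [|x a] //= [g [g_mono g_le]].
  by have [] := g_le 0 (ltn0Sn _).
have g_pos j : 0 < j < (size a).+1 -> 0 < g j.
  by case/andP=> j0 hj; have := g_mono 0 j j0 hj; lia.
case: ifP => hxc; apply: IH.
  exists (fun j => (g j.+1).-1); split.
    move=> j1 j2 h1 h2; have := g_mono j1.+1 j2.+1 h1 h2.
    have := g_pos j1.+1; lia.
  move=> j hj; have := g_pos j.+1 hj; have := g_le j.+1 hj.
  by case: (g j.+1).
have g0 : 0 < g 0.
  by have := g_le 0 (ltn0Sn _); case: (g 0) => [[_ hx]|] //; rewrite hx in hxc.
exists (fun j => (g j).-1); split.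
  move=> j1 j2 h1 /= h2; have := g_mono j1 j2 h1 h2.
  case: j1 h1 => [|j1] h1; first by have := g0; lia.
  by have := g_pos j1.+1; lia.
move=> j /= hj; have := g_le j hj.
have : 0 < g j by case: j hj => [|j] hj //; apply: g_pos.
by case: (g j).
Qed.

Lemma dominatesP b a : dominates b a <-> greedy_dom b a.
Proof.
rewrite dominates_dom_nat; split; [exact: greedy_dom_complete | exact: greedy_dom_sound].
Qed.

(* Enumeration of the compositions of n, by their first part c; the fuel
   argument bounds the recursion depth and is irrelevant once fuel >= n. *)
Fixpoint compositions_fuel (fuel n : nat) : seq (seq nat) :=
  if n is 0 then [:: [::]] else
  if fuel is k.+1 then
    [seq c :: b | c <- iota 1 n, b <- compositions_fuel k (n - c)]
  else [::].

Definition compositions (n : nat) : seq (seq nat) := compositions_fuel n n.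

Lemma compositions_fuelS k n : compositions_fuel k.+1 n.+1 =
  [seq c :: b | c <- iota 1 n.+1, b <- compositions_fuel k (n.+1 - c)].
Proof. by []. Qed.

Lemma compositions_fuel_enough k1 k2 n :
  n <= k1 -> n <= k2 -> compositions_fuel k1 n = compositions_fuel k2 n.
Proof.
elim: k1 k2 n => [|j1 IH] [|j2] [|n] h1 h2 //.
rewrite !compositions_fuelS; congr flatten; apply/eq_in_map => c.
by rewrite mem_iota => hc; congr map; apply: IH; lia.
Qed.

Lemma mem_compositions_fuel k n b : n <= k ->
  (b \in compositions_fuel k n) = all (fun x => 0 < x) b && (sumn b == n).
Proof.
elim: k n b => [|j IH] [|n] b hn //.
- by rewrite inE; case: b => [|[|x] b] //=; rewrite addSn andbF.
- by rewrite inE; case: b => [|[|x] b] //=; rewrite addSn andbF.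
rewrite compositions_fuelS; apply/allpairsPdep/idP.
  move=> [c [b' [+ + ->]]]; rewrite mem_iota => hc.
  rewrite IH; last by lia.
  move=> /andP [h1 /eqP h2] /=; rewrite h1 andbT.
  by apply/andP; split; [lia | apply/eqP; lia].
case: b => [|c b'] //= /andP [/andP [hc hb] /eqP hs].
exists c, b'; split=> //; first by change (c \in iota 1 n.+1); rewrite mem_iota; lia.
by rewrite IH ?hb /=; [apply/eqP | ]; lia.
Qed.

Lemma uniq_compositions_fuel k n : uniq (compositions_fuel k n).
Proof.
elim: k n => [|j IH] [|n] //; rewrite compositions_fuelS.
by apply: allpairs_uniq_dep => [||[c1 b1] [c2 b2] _ _ /= [-> ->]] //;
  exact: iota_uniq.
Qed.

Definition ndom (a : seq nat) (n : nat) : nat :=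
  count (greedy_dom^~ a) (compositions n).

Definition hit (x c : nat) : nat := (0 < c) && (x <= c).
Definition skip (x c : nat) : nat := (0 < c) && (c < x).

Lemma ndom_rec x a n :
  ndom (x :: a) n = conv (hit x) (ndom a) n + conv (skip x) (ndom (x :: a)) n.
Proof.
case: n => [|n]; first by rewrite /ndom /conv !big_ord1.
rewrite {1}/ndom /compositions compositions_fuelS count_flatten -map_comp sumnE.
rewrite big_map /conv -big_split /= -(big_mkord xpredT
  (fun i => hit x i * ndom a (n.+1 - i) + skip x i * ndom (x :: a) (n.+1 - i))).
rewrite big_ltn // add0n /index_iota subSS subn0; apply: eq_big_seq => c hc.
have /andP [c_pos c_le] : 0 < c < n.+2 by rewrite -mem_iota.
(* The compositions with first part c are c :: b' with b' a composition of
   n.+1 - c; the greedy test matches x with c exactly when x <= c. *)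
rewrite /= count_map (@compositions_fuel_enough n (n.+1 - c)) ?leq_subr //; try lia.
rewrite /hit /skip c_pos ltnNge /ndom; case hxc: (x <= c) => /=.
  by rewrite mul1n mul0n addn0; apply: eq_count => b /=; rewrite hxc.
by rewrite mul0n mul1n; apply: eq_count => b /=; rewrite hxc.
Qed.

(* N_x: the generating sequence of the "blocks" ending with the part matched
   to x. *)
Definition block (x : nat) : nat -> nat := rec_sol (hit x) (skip x).

(* Both sides solve G = P_x * D_a + Q_x * G, whose solution is unique. *)
Lemma ndom_cons x a : ndom (x :: a) =1 conv (block x) (ndom a).
Proof.
apply: (@rec_uniq (conv (hit x) (ndom a)) (skip x)) => // n.
- exact: ndom_rec.
- by apply: conv_rec_sol => // m; exact: rec_solE.
Qed.

(* Two neighbouring parts of a can be exchanged, as convolution commutes. *)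
Lemma ndom_swap x y a : ndom (x :: y :: a) =1 ndom (y :: x :: a).
Proof.
have two_blocks u v : ndom (u :: v :: a) =1 conv (block u) (conv (block v) (ndom a)).
  by move=> n; rewrite ndom_cons; apply: eq_conv => // k; exact: ndom_cons.
move=> n; rewrite !two_blocks !convA; apply: eq_conv => // k; exact: convC.
Qed.

(* Invariance under permutation: move the head of a to its place in a'. *)
Lemma ndom_perm a a' : perm_eq a a' -> ndom a =1 ndom a'.
Proof.
have ndom_cons_eq z a1 a2 : ndom a1 =1 ndom a2 -> ndom (z :: a1) =1 ndom (z :: a2).
  by move=> h n; rewrite !ndom_cons; apply: eq_conv.
have ndom_move x p s : ndom (x :: p ++ s) =1 ndom (p ++ x :: s).
  elim: p => [|z p IH] //= n.
  by rewrite ndom_swap; apply: ndom_cons_eq.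
elim: a a' => [|x r IH] a' hp; first by move: hp; rewrite perm_sym => /perm_nilP ->.
have hx : x \in a' by rewrite -(perm_mem hp) mem_head.
case/splitPr: hx hp => p s.
rewrite -[x :: s]cat1s perm_sym perm_catCA /= perm_sym perm_cons => hp.
by move=> n; rewrite -ndom_move; exact: ndom_cons_eq (IH _ hp) n.
Qed.

Lemma size_enum_dom a n (L : seq (seq nat)) : uniq L ->
  (forall b, b \in L <-> (is_composition b /\ sumn b = n /\ dominates b a)) ->
  size L = ndom a n.
Proof.
move=> uL hL.
have eqL : L =i filter (greedy_dom^~ a) (compositions n).
  move=> b; rewrite mem_filter mem_compositions_fuel //.
  apply/idP/idP => [/hL [hb [hs /dominatesP hd]] | /and3P [hd hb /eqP hs]].
    by rewrite hd hb hs eqxx.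
  by apply/hL; do !split=> //; exact/dominatesP.
have := uniq_size_uniq uL eqL.
by rewrite filter_uniq ?uniq_compositions_fuel // size_filter => /esym/eqP.
Qed.

Theorem lemma2p3 (a a' : seq nat) :
  is_composition a -> is_composition a' -> perm_eq a a' ->
  forall (n : nat) (L L' : seq (seq nat)),
    uniq L -> uniq L' ->
    (forall b, b \in L <-> (is_composition b /\ sumn b = n /\ dominates b a)) ->
    (forall b, b \in L' <-> (is_composition b /\ sumn b = n /\ dominates b a')) ->
    size L = size L'.
Proof.
move=> _ _ hp n L L' uL uL' hL hL'.
by rewrite (size_enum_dom uL hL) (size_enum_dom uL' hL') (ndom_perm hp).
Qed.
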